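(* Let $p\in(0,1)$ and let $\mu\ge1$ be an integer. Let $X_1,X_2,\dots$ be i.i.d. Bernoulli random variables with $\Pr[X_t=1]=p$. Define sets $M,N\subseteq\mathbb{N}$ by the following process: starting from $t=1$, put $t$ into $M$ if $X_t=1$ and into $N$ if $X_t=0$; the process terminates immediately after $|M|=\mu$. For each $t\ge1$ let $w_t=w_t(X_1,\dots,X_{t-1})\ge0$ be a non-negative function of the first $t-1$ variables ($w_1$ a constant), with $w_t=0$ whenever the process terminated before time $t$, and for $T\subseteq\mathbb{N}$ set $w(T)=\sum_{t\in T}w_t(X_1,\dots,X_{t-1})$. Then $$\mathbb{E}[w(M)]=\frac{p}{1-p}\,\mathbb{E}[w(N)].$$ *)

From mathcomp Require Import all_boot all_order all_algebra.
From mathcomp Require Import all_classical all_reals all_analysis.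
Set Implicit Arguments. Unset Strict Implicit. Unset Printing Implicit Defensive.
Import Order.TTheory GRing.Theory Num.Theory.
Local Open Scope classical_set_scope.
Local Open Scope ring_scope.
Local Open Scope ereal_scope.

Definition hist (T : Type) (X : nat -> T -> bool) (t : nat) (x : T) : seq bool :=
  [seq X i x | i <- iota 1 t.-1].

(* M: times t >= 1 with X_t = 1 at which the process has not yet terminated
   (fewer than mu ones among X_1..X_{t-1}). *)
Definition setM (T : Type) (mu : nat) (X : nat -> T -> bool) (x : T) : set nat :=
  [set t | (1 <= t)%N /\ X t x = true /\ (count id (hist X t x) < mu)%N].

Definition setN (T : Type) (mu : nat) (X : nat -> T -> bool) (x : T) : set nat :=
  [set t | (1 <= t)%N /\ X t x = false /\ (count id (hist X t x) < mu)%N].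

Definition wsum (R : realType) (T : Type) (w : nat -> seq bool -> R)
  (X : nat -> T -> bool) (x : T) (A : set nat) : \bar R :=
  \esum_(t in A) (w t (hist X t x))%:E.

Definition iid_bernoulli (R : realType) (d : measure_display) (T : measurableType d)
  (P : probability T R) (X : nat -> T -> bool) (p : R) : Prop :=
  (forall t, (1 <= t)%N -> measurable [set x | X t x = true]) /\
  (forall (S : seq nat) (b : nat -> bool), uniq S -> all (fun t => 1 <= t)%N S ->
     P (\big[setI/setT]_(t <- S) [set x | X t x = b t]) =
     (\prod_(t <- S) (if b t then p else 1 - p)%R)%:E).

From mathcomp Require Import all_boot all_order all_algebra.
From mathcomp Require Import all_classical all_reals all_analysis.
From mathcomp Require Import measurable_realfun.
Import Order.TTheory GRing.Theory Num.Theory.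
Set Implicit Arguments. Unset Strict Implicit. Unset Printing Implicit Defensive.
Local Open Scope classical_set_scope.
Local Open Scope ring_scope.

(* The weight w_t is a function of the history X_1, ..., X_{t-1}, which is
   independent of X_t, so E[w_t 1{X_t = b}] = Pr[X_t = b] E[w_t]. Summing over t
   by monotone convergence gives E[w(M)] = p S and E[w(N)] = (1 - p) S with
   S = sum_t E[w_t]. The stopping rule needs no separate treatment: w_t vanishes
   once the process has terminated. *)

Lemma map_nth_iota1 (A : Type) (x0 : A) (s : seq A) :
  [seq nth x0 s i.-1 | i <- iota 1 (size s)] = s.
Proof.
rewrite -[RHS](mkseq_nth x0) /mkseq -add1n iotaDl -map_comp.
by apply: eq_map => i.
Qed.

Lemma sum_tuples_eq_val (R : nzRingType) n (u : seq bool) (g : seq bool -> R) :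
  size u = n -> g u = \sum_(s : n.-tuple bool) g s * (u == s)%:R.
Proof.
move=> /eqP su; rewrite (bigD1 (Tuple su)) //= eqxx mulr1 big1 ?addr0 //.
move=> s /negbTE ns; rewrite (_ : (u == s) = false) ?mulr0 //.
by apply: contraFF ns => /eqP us; apply/eqP/val_inj; rewrite /= us.
Qed.

Lemma indic_set_eq (R : nzRingType) (T : Type) (U : eqType) (h : T -> U) a x :
  \1_[set y | h y = a] x = (h x == a)%:R :> R.
Proof.
rewrite indicE; case: (h x =P a) => [<-|ne]; first by rewrite mem_set.
by rewrite memNset.
Qed.

Section History.
Variables (T : Type) (X : nat -> T -> bool).

Lemma size_hist t x : size (hist X t x) = t.-1.
Proof. by rewrite /hist size_map size_iota. Qed.

Lemma hist_rcons n x : hist X n.+2 x = rcons (hist X n.+1 x) (X n.+1 x).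
Proof.
rewrite /hist (_ : n.+2.-1 = n + 1)%N; last by rewrite addn1.
by rewrite iotaD map_cat add1n cats1.
Qed.

Lemma hist_eventE n (s : seq bool) : size s = n ->
  [set x | hist X n.+1 x = s] =
  \big[setI/setT]_(i <- iota 1 n) [set x | X i x = nth false s i.-1].
Proof.
move=> <-{n}; rewrite -bigcap_seq; apply/seteqP; split => x /=.
  by rewrite -{2}(map_nth_iota1 false s) => /eq_in_map.
by move=> Xs; rewrite -[RHS](map_nth_iota1 false s); apply/eq_in_map.
Qed.

Lemma hist_indicator_sum (R : nzRingType) n (f : seq bool -> R) x :
  f (hist X n.+1 x) = \sum_(s : n.-tuple bool) f s * \1_[set y | hist X n.+1 y = s] x.
Proof.
rewrite (sum_tuples_eq_val _ (size_hist n.+1 x)).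
by apply: eq_bigr => s _; rewrite indic_set_eq.
Qed.

Lemma next_indicator_sum (R : nzRingType) n b (f : seq bool -> R) x :
  (X n.+1 x == b)%:R * f (hist X n.+1 x) =
  \sum_(s : n.-tuple bool) f s * \1_[set y | hist X n.+2 y = rcons s b] x.
Proof.
rewrite mulr_natl -mulr_natr.
rewrite (sum_tuples_eq_val (fun s => f s * (X n.+1 x == b)%:R) (size_hist n.+1 x)).
apply: eq_bigr => s _; rewrite indic_set_eq hist_rcons eqseq_rcons.
by rewrite -mulrA -natrM mulnb andbC.
Qed.

End History.

Local Open Scope ereal_scope.

Lemma integral_sum_indic (R : realType) d (T : measurableType d) (mu : measure T R)
    (I : finType) (c : I -> R) (A : I -> set T) :
  (forall i, 0 <= c i)%R -> (forall i, measurable (A i)) ->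
  \int[mu]_x (\sum_i c i * \1_(A i) x)%:E = \sum_i (c i)%:E * mu (A i).
Proof.
move=> c0 mA; under eq_integral do rewrite -sumEFin.
rewrite ge0_integral_sum //; last 2 first.
- move=> i; apply/measurable_EFinP/measurable_funM; first exact: measurable_cst.
  exact: measurable_indic.
- by move=> i x _; rewrite lee_fin mulr_ge0.
apply: eq_bigr => i _; under eq_integral do rewrite EFinM.
rewrite ge0_integralZl_EFin //; last by apply/measurable_EFinP/measurable_indic.
by rewrite integral_indic // setIT.
Qed.

Lemma measurable_sum_indic (R : realType) d (T : measurableType d)
    (I : finType) (c : I -> R) (A : I -> set T) :
  (forall i, measurable (A i)) ->
  measurable_fun setT (fun x => \sum_i c i * \1_(A i) x)%R.
Proof.
move=> mA; apply: measurable_sum => i; apply: measurable_funM.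
  exact: measurable_cst.
exact: measurable_indic.
Qed.

Section HistoryLaw.
Variables (R : realType) (d : measure_display) (T : measurableType d).
Variables (P : probability T R) (X : nat -> T -> bool) (p : R).
Hypothesis iidX : iid_bernoulli P X p.

Lemma measurable_hist_event n (s : seq bool) : size s = n ->
  measurable [set x | hist X n.+1 x = s].
Proof.
move=> sn; rewrite hist_eventE // big_seq.
apply: (big_ind measurable) => //; first exact: measurableI.
move=> i /[!mem_iota] /andP[i1 _]; have mXi := iidX.1 i i1.
case: (nth false s i.-1) => //.
rewrite (_ : [set x | X i x = false] = ~` [set x | X i x = true]).
  exact: measurableC.
by apply/seteqP; split => x /=; case: (X i x).
Qed.

Lemma prob_hist_event n (s : seq bool) : size s = n ->
  P [set x | hist X n.+1 x = s] = (\prod_(c <- s) bernoulli_pmf p c)%:E.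
Proof.
move=> sn; rewrite hist_eventE // iidX.2 ?iota_uniq //; last first.
  by apply/allP => i /[!mem_iota] /andP[].
by rewrite -[in RHS](map_nth_iota1 false s) big_map sn.
Qed.

Lemma integral_hist n (f : seq bool -> R) :
  (forall s, size s = n -> 0 <= f s)%R ->
  \int[P]_x (f (hist X n.+1 x))%:E =
  \sum_(s : n.-tuple bool) (f s * \prod_(c <- s) bernoulli_pmf p c)%:E.
Proof.
move=> f0; under eq_integral do rewrite (hist_indicator_sum X n f).
rewrite integral_sum_indic; last 2 first.
- by move=> s; apply: f0; rewrite size_tuple.
- by move=> s; apply: measurable_hist_event; rewrite size_tuple.
by apply: eq_bigr => s _; rewrite EFinM -(prob_hist_event (size_tuple s)).
Qed.

Lemma integral_next_indep n b (f : seq bool -> R) :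
  (forall s, size s = n -> 0 <= f s)%R ->
  \int[P]_x ((X n.+1 x == b)%:R * f (hist X n.+1 x))%:E =
  (bernoulli_pmf p b)%:E * \int[P]_x (f (hist X n.+1 x))%:E.
Proof.
move=> f0; under eq_integral do rewrite (next_indicator_sum X n b f).
rewrite integral_sum_indic ?integral_hist //; last 2 first.
- by move=> s; apply: f0; rewrite size_tuple.
- by move=> s; apply: measurable_hist_event; rewrite size_rcons size_tuple.
rewrite sumEFin -EFinM big_distrr -sumEFin; apply: eq_bigr => s _.
have prob_sb : P [set x | hist X n.+2 x = rcons s b] =
    (\prod_(c <- s) bernoulli_pmf p c * bernoulli_pmf p b)%:E.
  by rewrite prob_hist_event ?big_rcons // size_rcons size_tuple.
by rewrite /= mulrCA (mulrC (bernoulli_pmf p b)) EFinM -prob_sb.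
Qed.

End HistoryLaw.

Definition weight_term (R : realType) (T : Type) (X : nat -> T -> bool)
    (w : nat -> seq bool -> R) (b : bool) (t : nat) (x : T) : \bar R :=
  if t is n.+1 then ((X n.+1 x == b)%:R * w n.+1 (hist X n.+1 x))%:E else 0.

Lemma wsum_weight_series (R : realType) (T : Type) (mu : nat) (X : nat -> T -> bool)
    (w : nat -> seq bool -> R) b x :
  (forall t s, (1 <= t)%N -> size s = t.-1 -> (0 <= w t s)%R) ->
  (forall t s, (1 <= t)%N -> size s = t.-1 -> (mu <= count id s)%N -> w t s = 0%R) ->
  wsum w X x [set t | (1 <= t)%N /\ X t x = b /\ (count id (hist X t x) < mu)%N] =
  \sum_(t <oo) weight_term X w b t x.
Proof.
move=> w_ge0 w_stop; rewrite /wsum esum_mkcond -nneseries_esumT; last first.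
  move=> t; case: ifP => // /[!inE] -[t1 _]; rewrite lee_fin.
  by apply: w_ge0; rewrite ?size_hist.
apply: eq_eseriesr => -[|n] _; first by case: ifP => // /[!inE] -[].
rewrite /weight_term; case: ifPn => [/[!inE] -[_ [-> _]]|].
  by rewrite eqxx mul1r.
rewrite notin_setE /= => notM.
case: (X n.+1 x =P b) => [Xb|_]; last by rewrite mul0r.
rewrite mul1r (w_stop _ _ _ (size_hist _ _ _)) // leqNgt; apply/negP => cnt.
by apply: notM.
Qed.

Section WeightedTimes.
Variables (R : realType) (d : measure_display) (T : measurableType d).
Variables (P : probability T R) (X : nat -> T -> bool) (p : R).
Variable w : nat -> seq bool -> R.
Hypothesis iidX : iid_bernoulli P X p.
Hypothesis w_ge0 : forall t s, (1 <= t)%N -> size s = t.-1 -> (0 <= w t s)%R.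

Definition expected_weight (t : nat) : \bar R :=
  if t is n.+1 then \int[P]_x (w n.+1 (hist X n.+1 x))%:E else 0.

Lemma weight_term_ge0 b t x : 0 <= weight_term X w b t x.
Proof.
case: t => [|n] //=; rewrite lee_fin mulr_ge0 //.
by apply: w_ge0; rewrite ?size_hist.
Qed.

Lemma expected_weight_ge0 t : 0 <= expected_weight t.
Proof.
case: t => [|n] //=; apply: integral_ge0 => x _; rewrite lee_fin.
by apply: w_ge0; rewrite ?size_hist.
Qed.

Lemma measurable_weight_term b t : measurable_fun setT (weight_term X w b t).
Proof.
case: t => [|n]; first exact: measurable_cst.
rewrite /weight_term; apply/measurable_EFinP.
rewrite (funext (fun x => next_indicator_sum X n b (w n.+1) x)).
apply: measurable_sum_indic => s; apply: (measurable_hist_event iidX).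
by rewrite size_rcons size_tuple.
Qed.

Lemma integral_weight_term b t :
  \int[P]_x weight_term X w b t x = (bernoulli_pmf p b)%:E * expected_weight t.
Proof.
case: t => [|n]; first by rewrite integral0 mule0.
by apply: (integral_next_indep iidX) => s sn; apply: w_ge0.
Qed.

Lemma integral_wsum_outcome mu b :
  (forall t s, (1 <= t)%N -> size s = t.-1 -> (mu <= count id s)%N -> w t s = 0%R) ->
  \int[P]_x wsum w X x [set t | (1 <= t)%N /\ X t x = b /\ (count id (hist X t x) < mu)%N] =
  (bernoulli_pmf p b)%:E * \sum_(t <oo) expected_weight t.
Proof.
move=> w_stop; under eq_integral do rewrite (wsum_weight_series _ _ _ w_ge0 w_stop).
rewrite integral_nneseries //; last 2 first.
- exact: measurable_weight_term.
- by move=> t x _; apply: weight_term_ge0.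
rewrite -nneseriesZl; last by move=> t _; apply: expected_weight_ge0.
by apply: eq_eseriesr => t _; apply: integral_weight_term.
Qed.

End WeightedTimes.

Theorem proposition1 (R : realType) (d : measure_display) (T : measurableType d)
  (P : probability T R) (p : R) (mu : nat) (X : nat -> T -> bool)
  (w : nat -> seq bool -> R) :
  (0 < p < 1)%R -> (1 <= mu)%N -> iid_bernoulli P X p ->
  (forall t s, (1 <= t)%N -> size s = t.-1 -> (0 <= w t s)%R) ->
  (forall t s, (1 <= t)%N -> size s = t.-1 -> (mu <= count id s)%N -> w t s = 0%R) ->
  \int[P]_x wsum w X x (setM mu X x) =
    (p / (1 - p))%:E * \int[P]_x wsum w X x (setN mu X x).
Proof.
move=> /andP[p0 p1] _ iidX w_ge0 w_stop.
rewrite /setM /setN !(integral_wsum_outcome iidX w_ge0 _ w_stop) /=.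
by rewrite muleA -EFinM divfK // subr_eq0 eq_sym lt_eqF.
Qed.
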